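(* Fix integers $k\geq 2$, $a\in\mathbb{Z}$, $0\le s\le r$ with $r\ge 1$, and positive integers $A_1,\dots,A_r$. Let $P(y)=(y-a)^e\prod_{j=1}^t P_j(y)^{e_j}\in\mathbb{Z}[y]$ with $e\geq 1$, $e_j\ge 1$, where $P_1,\dots,P_t\in\mathbb{Z}[y]$ are distinct irreducible polynomials. Then the equation $$P(y)=\prod_{i=1}^s A_i^{n_i}n_i!\cdot\prod_{i=s+1}^r A_i^{n_i}n_i!!$$ has only finitely many solutions $(n_1,\dots,n_r,y)$ with $n_1,\dots,n_r$ positive integers and $y=x+a$ for some $x\in\mathcal{F}_k$.
   Context: For a positive integer $x=\prod_{i\in I}p_i^{\alpha_i}$ (prime factorization), $K(x)=\max_{i\in I}\alpha_i$ (with $K(1)=0$) and $\omega(x)=|I|$ is the number of distinct prime factors. $\mathcal{F}_k=\{x\in\mathbb{N}: K(x)<k\}$ (positive integers all of whose prime exponents are $<k$). $n!!$ is the double factorial. *)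

From mathcomp Require Import all_boot all_order all_algebra.
Set Implicit Arguments. Unset Strict Implicit. Unset Printing Implicit Defensive.
Import GRing.Theory Num.Theory.

Fixpoint dfact (n : nat) : nat :=
  match n with
  | 0 => 1
  | 1 => 1
  | (m.+2) as n' => n' * dfact m
  end.

Definition Kexp (x : nat) : nat := \max_(p <- primes x) logn p x.

Definition inFk (k x : nat) : bool := (0 < x) && (Kexp x < k).

From mathcomp Require Import all_boot all_order all_algebra.
From mathcomp Require Import zify.
Import Order.TTheory GRing.Theory Num.Theory.

Set Implicit Arguments.
Unset Strict Implicit.
Unset Printing Implicit Defensive.

(* Since (y - a) | P(y) and y - a = x, the prime factors of x divide the
   right-hand side, hence are at most Z := max A_i + max n_i.  Being k-free,
   x then divides (prod_{p <= Z} p)^k <= 4^(Z k), so |P(y)| is at most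
   C * g^(max n_i) for constants C, g.  The right-hand side is at least
   (max n_i)!!, which outgrows every exponential; this bounds max n_i, and then
   x. *)

Lemma prime_dvd_fact p n : prime p -> p %| n`! -> p <= n.
Proof.
move=> pp; elim: n => [|n IHn]; first by rewrite Euclid_dvd1.
by rewrite factS Euclid_dvdM // => /orP [/dvdn_leq -> // | /IHn /leqW].
Qed.

Lemma leq_wexp2r m n e : m <= n -> m ^ e <= n ^ e.
Proof. by case: e => // e; rewrite leq_exp2r. Qed.

Definition prod_primes m n := \prod_(m <= p < n | prime p) p.

Lemma dvdn_prod_primes p m n : prime p -> m <= p < n -> p %| prod_primes m n.
Proof.
move=> pp range; rewrite /prod_primes big_mkcond (bigD1_seq p) ?mem_index_iota ?iota_uniq //=.
by rewrite pp dvdn_mulr.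
Qed.

Lemma prod_primes_dvd m n x : 0 < x ->
  (forall p, prime p -> m <= p < n -> p %| x) -> prod_primes m n %| x.
Proof.
elim: n => [|n IHn] x_gt0 dvd_x; first by rewrite /prod_primes big_geq.
have [lt_nm | le_mn] := ltnP n m; first by rewrite /prod_primes big_geq.
rewrite /prod_primes big_mkcond big_nat_recr //= -big_mkcond -/(prod_primes m n).
have IH : prod_primes m n %| x.
  by apply: IHn => // p pp /andP [le_mp lt_pn]; apply: dvd_x; rewrite // le_mp ltnW.
case: ifP => [pn | _]; last by rewrite muln1.
rewrite Gauss_dvd ?IH ?dvd_x ?le_mn ?ltnSn //.
rewrite coprime_sym prime_coprime // /prod_primes Euclid_dvd_prod // big_has_cond.
apply/hasPn => p; rewrite mem_index_iota => /andP [_ lt_pn] /=.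
by apply/negP => /andP [pp]; rewrite dvdn_prime2 // => /eqP n_eq_p; lia.
Qed.

Lemma prime_dvd_bin_mid p m : prime p -> m.+1 < p <= m.*2.+1 -> p %| 'C(m.*2.+1, m).
Proof.
move=> pp /andP [lo hi].
have : p %| 'C(m.*2.+1, m) * (m`! * (m.*2.+1 - m)`!).
  by rewrite bin_fact ?dvdn_fact ?prime_gt0 //; lia.
by rewrite !Euclid_dvdM // => /orP [// | /orP [] /prime_dvd_fact]; lia.
Qed.

Lemma bin_mid_le m : 'C(m.*2.+1, m) <= 4 ^ m.
Proof.
set n := m.*2.+1.
have sym : 'C(n, m.+1) = 'C(n, m).
  have -> : m.+1 = n - m by rewrite /n; lia.
  by rewrite bin_sub // /n; lia.
have : 'C(n, m) + 'C(n, m.+1) <= 2 ^ n.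
  rewrite -[2]/(1 + 1) Pascal -(big_mkord xpredT (fun i => 'C(n, i) * (1 ^ (n - i) * 1 ^ i))).
  have lt_mn : m.+1 < n.+1 by rewrite /n; lia.
  rewrite (@big_cat_nat _ _ _ m) ?(ltnW (ltnW lt_mn)) //.
  rewrite [X in _ <= _ + X]big_ltn ?(ltnW lt_mn) // [X in _ <= _ + (_ + X)]big_ltn //.
  by simpl; rewrite !exp1n !muln1; lia.
by rewrite sym addnn -mul2n /n expnS -mul2n expnM leq_pmul2l.
Qed.

(* Erdos's argument: for odd n = 2m + 1 the primes in (m + 1, n] divide C(n, m). *)
Lemma prod_primes_le n : prod_primes 0 n.+1 <= 4 ^ n.
Proof.
elim/ltn_ind: n => n IHn.
have [le_n2 | lt2n] := leqP n 2.
  by clear IHn; case: n le_n2 => [|[|[|n]]] //; rewrite /prod_primes unlock.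
have [n_odd | n_even] := boolP (odd n).
  set m := n./2; have n_eq : n = m.*2.+1 by rewrite -[LHS]odd_double_half n_odd.
  rewrite n_eq /prod_primes (@big_cat_nat _ _ _ m.+2) //=; try lia.
  have low : prod_primes 0 m.+2 <= 4 ^ m.+1 by apply: IHn; lia.
  have high : prod_primes m.+2 m.*2.+2 <= 4 ^ m.
    apply: leq_trans (bin_mid_le m); apply: dvdn_leq; first by rewrite bin_gt0; lia.
    by apply: prod_primes_dvd => [|p pp range]; [rewrite bin_gt0; lia | apply: prime_dvd_bin_mid].
  by apply: leq_trans (leq_mul low high) _; rewrite -expnD leq_exp2l //; lia.
have n_np : ~~ prime n.
  by apply/negP => /even_prime [n2 | n_odd]; [lia | rewrite n_odd in n_even].
have n_eq : n = n.-1.+1 by lia.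
rewrite /prod_primes big_mkcond big_nat_recr //= (negbTE n_np) muln1 -big_mkcond.
by rewrite n_eq; apply: leq_trans (IHn _ _) _; rewrite ?leq_exp2l //; lia.
Qed.

Lemma logn_le_Kexp p x : logn p x <= Kexp x.
Proof.
have [-> // | ] := posnP (logn p x); rewrite logn_gt0 => p_x.
exact: (@leq_bigmax_seq _ _ xpredT (fun q => logn q x) p p_x).
Qed.

Lemma inFk_dvd_prod_primes k x z : inFk k x ->
  (forall p, prime p -> p %| x -> p <= z) -> x %| prod_primes 0 z.+1 ^ k.
Proof.
case/andP => x_gt0 Kx_lt smooth; apply/dvdn_partP => // p.
rewrite mem_primes => /and3P [pp _ p_x]; rewrite p_part.
apply: (@dvdn_trans (p ^ k)); last by rewrite dvdn_exp2r // dvdn_prod_primes ?ltnS ?smooth.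
by rewrite dvdn_Pexp2l ?prime_gt1 // ltnW // (leq_ltn_trans (logn_le_Kexp p x)).
Qed.

Lemma inFk_smooth_le k x z : inFk k x ->
  (forall p, prime p -> p %| x -> p <= z) -> x <= 4 ^ (z * k).
Proof.
move=> Fk_x smooth; have /andP [x_gt0 Kx_lt] := Fk_x.
apply: leq_trans (dvdn_leq _ (inFk_dvd_prod_primes Fk_x smooth)) _.
  by rewrite expn_gt0 /prod_primes prodn_cond_gt0 // => p /prime_gt0.
by rewrite expnM leq_exp2r ?prod_primes_le //; apply: leq_ltn_trans Kx_lt.
Qed.

Lemma dfact_gt0 n : 0 < dfact n.
Proof. by elim/ltn_ind: n => [[|[|n]]] // IHn; rewrite /= muln_gt0 IHn. Qed.

Lemma dfact_dvd_fact n : dfact n %| n`!.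
Proof.
elim/ltn_ind: n => [[|[|n]]] // IHn.
by rewrite [dfact _]/= !factS dvdn_mul // dvdn_mull // IHn.
Qed.

Lemma leq_dfact n : n <= dfact n.
Proof. by case: n => [|[|n]] //=; rewrite leq_pmulr ?dfact_gt0. Qed.

Lemma exp_le_dfact c j : 0 < c -> c ^ j <= dfact (c ^ 2 + j).
Proof.
move=> c_gt0; elim/ltn_ind: j => [[|[|j]]] IHj.
- by rewrite dfact_gt0.
- by apply: leq_trans (leq_dfact _); rewrite !expnS !expn0; nia.
- rewrite !addnS [dfact _]/= -addn2 expnD mulnC.
  by apply: leq_mul; [lia | apply: IHj].
Qed.

(* With h = g + 1 and M = (2h)^2, dfact (M + j) >= (2h)^j while K g^(M + j) <= K h^M h^j. *)
Lemma dfact_dominates_exp K g : exists N0, forall N, N0 <= N -> K * g ^ N < dfact N.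
Proof.
set h := g.+1; set M := (2 * h) ^ 2.
exists (M + K * h ^ M) => N le_N0N.
have -> : N = M + (N - M) by lia.
set j := N - M.
have K_lt : K * h ^ M < 2 ^ j by apply: leq_ltn_trans (ltn_expl j (ltnSn 1)); rewrite /j; lia.
apply: (@leq_ltn_trans (K * h ^ (M + j))); first by rewrite leq_mul2l leq_wexp2r ?orbT.
apply: leq_trans (exp_le_dfact j (_ : 0 < 2 * h)) => //.
by rewrite expnD mulnA expnMn ltn_pmul2r // expn_gt0.
Qed.

Section IntPoly.
Local Open Scope ring_scope.

Definition coef_abs_sum (p : {poly int}) : nat := (\sum_(i < size p) absz (p`_i)%R)%N.

Lemma norm_horner_le (p : {poly int}) (z : int) :
  `|p.[z]| <= (\sum_(i < size p) `|p`_i|) * (`|z| + 1) ^+ size p.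
Proof.
rewrite horner_coef mulr_suml; apply: le_trans (ler_norm_sum _ _ _) _.
apply: ler_sum => i _; rewrite normrM normrX ler_wpM2l //.
apply: le_trans (_ : (`|z| + 1) ^+ i <= _).
  by apply: lerXn2r; rewrite ?nnegrE ?addr_ge0 // lerDl.
by apply: ler_weXn2l; [rewrite lerDr | apply: ltnW].
Qed.

Lemma absz_horner_le (p : {poly int}) (z : int) :
  (absz p.[z] <= coef_abs_sum p * (absz z).+1 ^ size p)%N.
Proof.
rewrite -lez_nat -!natz natrM natrX natr_sum -addn1 natrD !natz abszE.
apply: le_trans (norm_horner_le p z) _.
apply: ler_wpM2r; first by apply: exprn_ge0; rewrite addr_ge0.
by apply: ler_sum => i _; rewrite natz abszE.
Qed.

Lemma root_dvdz_horner (P : {poly int}) (a z : int) : root P a -> (z %| P.[z + a])%Z.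
Proof. by case/factor_theorem => Q ->; rewrite hornerM hornerXsubC addrK dvdz_mull. Qed.

End IntPoly.

Definition fact_dfact_prod r s (A n : 'I_r -> nat) : nat :=
  \prod_(i < r | i < s) (A i ^ n i * (n i)`!) * \prod_(i < r | s <= i) (A i ^ n i * dfact (n i)).

Section FactDfactProd.
Variables (r s : nat) (A : 'I_r -> nat).
Hypothesis A_gt0 : forall i, 0 < A i.

Lemma fact_dfact_prod_gt0 n : 0 < fact_dfact_prod s A n.
Proof.
by rewrite muln_gt0 !prodn_cond_gt0 // => i _; rewrite muln_gt0 expn_gt0 A_gt0 ?fact_gt0 ?dfact_gt0.
Qed.

Lemma fact_dfact_prod_dvd n : fact_dfact_prod s A n %| \prod_(i < r) (A i ^ n i * (n i)`!).
Proof.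
rewrite (bigID (fun i : 'I_r => i < s)) /= dvdn_mul //.
rewrite (eq_bigl (fun i : 'I_r => s <= i)) => [|i]; last by rewrite -leqNgt.
by elim/big_ind2: _ => // [*|i _]; rewrite dvdn_mul // dfact_dvd_fact.
Qed.

Lemma prime_dvd_fact_dfact_prod n p : prime p -> p %| fact_dfact_prod s A n ->
  p <= \max_(i < r) A i + \max_(i < r) n i.
Proof.
move=> pp /dvdn_trans/(_ (fact_dfact_prod_dvd n)); rewrite Euclid_dvd_prod // big_orE.
case/existsP => i /=; rewrite Euclid_dvdM // Euclid_dvdX // => /orP [/andP [p_A _] | p_fact].
  apply: leq_trans (dvdn_leq (A_gt0 i) p_A) (leq_trans _ (leq_addr _ _)).
  exact: leq_bigmax.
apply: leq_trans (prime_dvd_fact pp p_fact) (leq_trans _ (leq_addl _ _)).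
exact: leq_bigmax.
Qed.

Lemma dfact_bigmax_le n : 0 < r -> dfact (\max_(i < r) n i) <= fact_dfact_prod s A n.
Proof.
move=> r_gt0; have [i0 ->] : {i0 | \max_(i < r) n i = n i0}.
  by apply: bigop.eq_bigmax; rewrite card_ord.
apply: dvdn_leq (fact_dfact_prod_gt0 n) _; rewrite /fact_dfact_prod.
have [lt_i0s | le_si0] := ltnP i0 s; [apply: dvdn_mulr | apply: dvdn_mull];
  rewrite (bigD1 i0) //= dvdn_mulr // dvdn_mull ?dfact_dvd_fact //.
Qed.

End FactDfactProd.

Section Solutions.
Variables (k r s : nat) (A : 'I_r -> nat) (a : int) (P : {poly int}).
Hypotheses (A_gt0 : forall i, 0 < A i) (Pa : root P a).

Lemma solution_x_le n x : inFk k x -> (P.[x%:Z + a] = (fact_dfact_prod s A n)%:Z)%R ->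
  x <= 4 ^ ((\max_(i < r) A i + \max_(i < r) n i) * k).
Proof.
move=> Fk_x eq_P; apply: (inFk_smooth_le Fk_x) => p pp p_x.
apply: (prime_dvd_fact_dfact_prod (s := s) A_gt0 pp); apply: dvdn_trans p_x _.
by have := root_dvdz_horner x%:Z Pa; rewrite eq_P dvdzE.
Qed.

Lemma solution_dfact_le n x : 0 < r -> inFk k x ->
  (P.[x%:Z + a] = (fact_dfact_prod s A n)%:Z)%R ->
  dfact (\max_(i < r) n i) <= coef_abs_sum P * (absz a).+2 ^ size P
    * (4 ^ (k * size P)) ^ (\max_(i < r) A i) * (4 ^ (k * size P)) ^ (\max_(i < r) n i).
Proof.
move=> r_gt0 Fk_x eq_P; set g := 4 ^ (k * size P).
have := solution_x_le Fk_x eq_P; set X := 4 ^ _ => x_le.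
apply: leq_trans (dfact_bigmax_le s A_gt0 n r_gt0) _.
have -> : fact_dfact_prod s A n = absz (P.[x%:Z + a])%R by rewrite eq_P.
apply: leq_trans (absz_horner_le P _) _; rewrite -!mulnA leq_mul2l; apply/orP; right.
have -> : g ^ (\max_(i < r) A i) * g ^ (\max_(i < r) n i) = X ^ size P.
  by rewrite -expnD /g /X -!expnM; congr (_ ^ _); lia.
rewrite -expnMn leq_wexp2r //.
have X_gt0 : 0 < X by rewrite expn_gt0.
have : absz (x%:Z + a)%R <= x + absz a by lia.
nia.
Qed.

Lemma solutions_max_bounded : 0 < r -> exists N0, forall n x, inFk k x ->
  (P.[x%:Z + a] = (fact_dfact_prod s A n)%:Z)%R -> \max_(i < r) n i < N0.
Proof.
move=> r_gt0; have [N0 dominated] := dfact_dominates_exp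
  (coef_abs_sum P * (absz a).+2 ^ size P * (4 ^ (k * size P)) ^ (\max_(i < r) A i))
  (4 ^ (k * size P)).
exists N0 => n x Fk_x eq_P; rewrite ltnNge; apply/negP => /dominated.
by rewrite ltnNge (solution_dfact_le r_gt0 Fk_x eq_P).
Qed.

End Solutions.

Lemma bounded_pairs_finite r N0 X0 (a : int) :
  exists L : seq ({ffun 'I_r -> nat} * int), forall (n : {ffun 'I_r -> nat}) (x : nat),
    (forall i, n i < N0) -> x <= X0 -> (n, (x%:Z + a)%R) \in L.
Proof.
pose ns := [seq [ffun i => val (f i)] | f : {ffun 'I_r -> 'I_N0}].
exists [seq (n, (x%:Z + a)%R) | n <- ns, x <- iota 0 X0.+1] => n x n_lt x_le.
apply: allpairs_f; last by rewrite mem_iota.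
apply/imageP; exists [ffun i => Ordinal (n_lt i)] => //.
by apply/ffunP => i; rewrite !ffunE.
Qed.

Local Open Scope ring_scope.

Theorem theorem4 (k : nat) (a : int) (r s : nat) (A : 'I_r -> nat)
    (e t : nat) (Pj : 'I_t -> {poly int}) (ej : 'I_t -> nat) :
  (2 <= k)%N -> (1 <= r)%N -> (s <= r)%N ->
  (forall i, (0 < A i)%N) ->
  (1 <= e)%N ->
  (forall j, (1 <= ej j)%N) ->
  injective Pj ->
  (forall j, irreducible_poly (Pj j)) ->
  let P : {poly int} := ('X - a%:P) ^+ e * \prod_(j < t) Pj j ^+ ej j in
  exists L : seq ({ffun 'I_r -> nat} * int),
    forall (n : {ffun 'I_r -> nat}) (y : int),
      (forall i, (0 < n i)%N) ->
      (exists x : nat, inFk k x /\ y = x%:Z + a) ->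
      P.[y] = ((\prod_(i < r | (i < s)%N) (A i ^ n i * (n i)`!)
                * \prod_(i < r | (s <= i)%N) (A i ^ n i * dfact (n i)))%N)%:Z ->
      (n, y) \in L.
Proof.
move=> _ r_gt0 _ A_gt0 e_gt0 _ _ _ P.
have Pa : root P a by rewrite rootE hornerM horner_exp hornerXsubC subrr expr0n gtn_eqF // mul0r.
have [N0 max_lt] := solutions_max_bounded k s A_gt0 Pa r_gt0.
have [L memL] := bounded_pairs_finite r N0 (4 ^ ((\max_(i < r) A i + N0) * k)) a.
exists L => n y _ [x [Fk_x ->]] eq_P.
have n_lt := max_lt n x Fk_x eq_P.
apply: memL => [i | ]; first exact: leq_ltn_trans (leq_bigmax i) n_lt.
apply: leq_trans (solution_x_le (s := s) A_gt0 Pa Fk_x eq_P) _.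
by rewrite leq_exp2l // leq_mul2r leq_add2l ltnW ?orbT.
Qed.
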